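(* Let $\mathcal{F}\subseteq\mathcal{P}(\omega)$ be compact (as a subset of $2^\omega$). Then $\mathbb{P}_{\mathcal{F}}$ is a closed subset of $\mathcal{K}(\mathcal{F})$ endowed with the Vietoris topology. Consequently $\mathbb{P}_{\mathcal{F}}$ is a compact subspace of $\mathcal{K}(\mathcal{F})$.
   Context: $\omega=\{1,2,3,\dots\}$. Subsets of $\omega$ are identified with their characteristic functions, i.e. with elements of the Cantor space $2^\omega$ (product topology); topological notions (closed, compact) for families $\mathcal{F}\subseteq\mathcal{P}(\omega)$ refer to this identification. A partition is a family $\mathcal{P}\subseteq\mathcal{P}(\omega)$ such that $\emptyset\in\mathcal{P}$, $\bigcup\mathcal{P}=\omega$, and the elements of $\mathcal{P}$ are pairwise disjoint. $\mathbb{P}_\mathcal{F}$ denotes the set of all partitions $\mathcal{P}$ with $\mathcal{P}\subseteq\mathcal{F}$. Every partition is a closed subset of $2^\omega$. For a compact space $X$, $\mathcal{K}(X)$ is the family of closed subsets of $X$ with the Vietoris topology, generated by the sets $\langle U_1,\dots,U_n\rangle=\{K\in\mathcal{K}(X): K\subseteq\bigcup_{i\le n}U_i \text{ and } K\cap U_i\neq\emptyset \text{ for all } i\le n\}$ with $U_i$ open in $X$. *)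

From HB Require Import structures.
From mathcomp Require Import all_boot all_order all_algebra.
From mathcomp Require Import all_classical all_reals.
From mathcomp Require Import topology cantor.

Set Implicit Arguments.
Unset Strict Implicit.
Unset Printing Implicit Defensive.

Local Open Scope classical_set_scope.

(* Subsets of omega = {1,2,3,...} are identified with points of the Cantor
   space cantor_space = bool^nat (product topology); the coordinate n : nat
   stands for the element n+1 of omega. *)

Definition is_partition (P : set cantor_space) : Prop :=
  [/\ P (fun _ => false),
      (forall n : nat, exists2 A, P A & A n = true) &
      (forall A B, P A -> P B -> A <> B -> forall n : nat, ~~ (A n && B n))].

Definition hyperspace (X : topologicalType) := set_type [set K : set X | closed K].

HB.instance Definition _ (X : topologicalType) := Choice.on (hyperspace X).
HB.instance Definition _ (X : topologicalType) :=
  isPointed.Build (hyperspace X) (@exist _ _ set0 (mem_set closed0)).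

(* The Vietoris set <U_0, ..., U_(n-1)> (n = 0 allowed: it is {empty set}). *)
Definition vietoris_basic (X : topologicalType) (n : nat) (U : nat -> set X)
    : set (hyperspace X) :=
  [set K | (set_val K `<=` \bigcup_(i in [set i | (i < n)%N]) U i) /\
           forall i, (i < n)%N -> set_val K `&` U i !=set0].

Definition vietoris_index (X : topologicalType) : set (nat * (nat -> set X)) :=
  [set nU | forall i, (i < nU.1)%N -> open (nU.2 i)].

HB.instance Definition _ (X : topologicalType) :=
  isSubBaseTopological.Build (hyperspace X) (@vietoris_index X)
    (fun nU => vietoris_basic nU.1 nU.2).

(* Since every
   partition is closed in 2^omega, this is exactly the set of partitions
   contained in F. *)
Definition partitions_in (F : set cantor_space) : set (hyperspace F) :=
  [set K | is_partition (set_val @` set_val K)].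
Arguments partitions_in F : clear implicits.

(* An ultrafilter U on the hyperspace of a compact space converges to its
   lower limit, the closed set of points each of whose open neighbourhoods
   meets U-almost every member: the lower Vietoris conditions hold by
   definition, and the upper one because otherwise U-almost every member
   meets the compact complement of an open W containing the lower limit,
   which produces a point of that complement in the lower limit.
   Partitions of omega form a closed subfamily since each defining
   condition negates a Vietoris-open one: omitting the empty set means
   lying inside the open set of nonempty subsets, not covering n means
   lying inside the clopen set {A | n \notin A}, and two distinct members
   sharing n means meeting the two complementary clopen sets
   {A | n \in A, (m \in A) = b} and {A | n \in A, (m \in A) = ~~ b}
   for some coordinate m separating them. *)
From HB Require Import structures.
From mathcomp Require Import all_boot all_order all_algebra.
From mathcomp Require Import all_classical all_reals.
From mathcomp Require Import topology cantor finmap.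

Local Open Scope classical_set_scope.

Section vietoris.
Context {X : topologicalType}.

Definition hyper_sub (W : set X) : set (hyperspace X) :=
  [set K | set_val K `<=` W].

Definition hyper_meet (W : set X) : set (hyperspace X) :=
  [set K | set_val K `&` W !=set0].

Lemma vietoris_basicE n (U : nat -> set X) :
  vietoris_basic n U =
  hyper_sub (\bigcup_(i < n) U i) `&` \bigcap_(i < n) hyper_meet (U i).
Proof. by []. Qed.

Lemma open_vietoris_basic n (U : nat -> set X) :
  (forall i, (i < n)%N -> open (U i)) -> open (vietoris_basic n U).
Proof.
move=> oU; exists [set vietoris_basic n U]; last by rewrite bigcup_set1.
move=> _ ->; exists [fset (n, U)]%fset; last by rewrite set_fset1 bigcap_set1.
by move=> i; rewrite inE => /eqP ->; apply/mem_set.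
Qed.

(* [vietoris_basic 0 _] is the singleton of the empty set. *)
Lemma hyper_subE (W : set X) :
  hyper_sub W = vietoris_basic 0 (fun=> W) `|` vietoris_basic 1 (fun=> W).
Proof.
apply/seteqP; split=> [K KW|K [[KW _]|[KW _]] x /KW [] // i _ Wx].
have [[x Kx]|K0] := pselect (set_val K !=set0).
  right; split=> [y /KW Wy|[|//] _]; first by exists 0%N.
  by exists x; split; [|apply: KW].
by left; split=> // x Kx; case: K0; exists x.
Qed.

Lemma hyper_meetE (W : set X) :
  hyper_meet W = vietoris_basic 2 (fun i => if i == 0%N then W else setT).
Proof.
apply/seteqP; split=> [K [x [Kx Wx]]|K [_ /(_ 0%N isT)] //].
by split=> [y _|[|[|//]] _]; [exists 1%N|exists x|exists x].
Qed.

Lemma open_hyper_sub (W : set X) : open W -> open (hyper_sub W).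
Proof.
by move=> oW; rewrite hyper_subE; apply: openU; apply: open_vietoris_basic.
Qed.

Lemma open_hyper_meet (W : set X) : open W -> open (hyper_meet W).
Proof.
move=> oW; rewrite hyper_meetE; apply: open_vietoris_basic => -[|i] _ //.
exact: openT.
Qed.

Lemma hyperspace_nbhs (L : hyperspace X) (A : set (hyperspace X)) :
  nbhs L A -> exists2 E : {fset nat * (nat -> set X)},
    {subset E <= @vietoris_index X} &
    (\bigcap_(i in [set` E]) vietoris_basic i.1 i.2) L /\
    \bigcap_(i in [set` E]) vietoris_basic i.1 i.2 `<=` A.
Proof.
rewrite nbhsE => -[B [[D sD <-] [C DC CL]] BA].
have [E sE CE] := sD C DC.
by exists E => //; rewrite CE; split=> // K CK; apply: BA; exists C.
Qed.

End vietoris.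

Section lower_limit.
Context {X : topologicalType} (cX : compact [set: X]).
Context (U : set_system (hyperspace X)) {UU : UltraFilter U}.

Definition lower_limit : set X :=
  [set x | forall W, open W -> W x -> U (hyper_meet W)].

Lemma lower_limitPn x :
  ~ lower_limit x -> exists2 W, open W /\ W x & U (~` hyper_meet W).
Proof.
move=> /existsNP[W /not_implyP[oW /not_implyP[Wx nUW]]]; exists W => //.
by case: (in_ultra_setVsetC (hyper_meet W) UU).
Qed.

Lemma closed_lower_limit : closed lower_limit.
Proof.
rewrite -[lower_limit]setCK; apply: open_closedC; rewrite openE => x /= nLx.
have [W [oW Wx] UnW] := lower_limitPn _ nLx.
apply: filterS (open_nbhs_nbhs (conj oW Wx)) => y Wy Ly.
by have [K []] := filter_ex (filterI (Ly W oW Wy) UnW).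
Qed.

Definition hyper_trace (C : set X) : set_system X :=
  [set A | U [set K | set_val K `&` C `<=` A]].

Lemma hyper_trace_proper (C : set X) :
  U (hyper_meet C) -> ProperFilter (hyper_trace C).
Proof.
move=> UC; have FC : Filter (hyper_trace C).
  apply: Build_Filter; rewrite /hyper_trace /=;
    [|move=> A B /= UA UB /=|move=> A B AB /= UA /=].
  - exact: filterS filterT.
  - apply: filterS (filterI UA UB) => K [KA KB] x Kx.
    by split; [apply: KA|apply: KB].
  - by apply: filterS UA => K KA x /KA /AB.
apply: Build_ProperFilter_ex => A; rewrite /hyper_trace /= => UA.
by have [K [KA [x KCx]]] := filter_ex (filterI UA UC); exists x; apply: KA.
Qed.

Lemma lower_limit_sub (W : set X) : open W ->
  lower_limit `<=` W -> U (hyper_sub W).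
Proof.
move=> oW LW; case: (in_ultra_setVsetC (hyper_sub W) UU) => // UnW.
have UC : U (hyper_meet (~` W)).
  apply: filterS UnW => K /= KnW; apply: contrapT => nKW; apply: KnW => x Kx.
  by apply: contrapT => nWx; apply: nKW; exists x.
have cC : compact (~` W).
  by apply: subclosed_compact cX _ => //; exact: open_closedC.
have PG := hyper_trace_proper _ UC.
have GC : hyper_trace (~` W) (~` W).
  by rewrite /hyper_trace /=; apply: filterS filterT => K _ x [].
have [x [nWx clx]] := cC _ PG GC.
suff /LW : lower_limit x by [].
apply: contrapT => /lower_limitPn[V [oV Vx] UnV].
have GV : hyper_trace (~` W) (~` V).
  rewrite /hyper_trace /=; apply: filterS UnV => K KnV y [Ky _] Vy.
  by apply: KnV; exists y.
by have [y []] := clx _ _ GV (open_nbhs_nbhs (conj oV Vx)).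
Qed.

Definition lower_limit_pt : hyperspace X :=
  exist _ lower_limit (mem_set closed_lower_limit).

Lemma lower_limit_basic n (V : nat -> set X) :
  (forall i, (i < n)%N -> open (V i)) ->
  vietoris_basic n V lower_limit_pt -> U (vietoris_basic n V).
Proof.
move=> oV [LV LM]; rewrite vietoris_basicE; apply: filterI.
  by apply: lower_limit_sub => //; apply: bigcup_open.
rewrite bigcap_mkord; apply: big_ind => //; [exact: filterT|exact: filterI|].
by move=> i _; have [x [Lx Vx]] := LM i (ltn_ord i); apply: Lx Vx; apply: oV.
Qed.

Lemma ultra_cvg_lower_limit : U --> lower_limit_pt.
Proof.
move=> A /hyperspace_nbhs[E sE [EL EA]]; apply: filterS EA _.
apply: filter_bigI => i iE; apply: lower_limit_basic (EL i iE).
by have /set_mem := sE i iE.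
Qed.

End lower_limit.

Lemma hyperspace_compact (X : topologicalType) :
  compact [set: X] -> compact [set: hyperspace X].
Proof.
move=> cX; rewrite compact_ultra => U UU _.
by exists (lower_limit_pt U); split=> //; exact: ultra_cvg_lower_limit.
Qed.

Lemma compact_set_type (X : topologicalType) (A : set X) :
  compact A -> compact [set: A].
Proof.
move=> cA V PV _.
have [p [Ap clp]] : exists p, A p /\ cluster (set_val @ V) p.
  apply: cA; rewrite /= /nbhs /=.
  by apply: filterS filterT => -[y Ay] _; exact/set_mem.
exists (exist _ p (mem_set Ap)); split => // B N VB [_ [[W oW <-] Wp] WN].
have VB' : V (set_val @^-1` (set_val @` B)).
  by apply: filterS VB => a Ba; exists a.
have [_ [[a Ba <-] Wa]] := clp _ _ VB' (open_nbhs_nbhs (conj oW Wp)).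
by exists a; split=> //; apply: WN.
Qed.

Definition bit_set (n : nat) (b : bool) : set cantor_space := [set C | C n = b].

Lemma open_bit_set n b : open (bit_set n b).
Proof.
have pn : continuous (fun C : cantor_space => C n).
  exact: @proj_continuous nat (fun=> bool) n.
exact: (continuousP _).1 pn [set b] (discrete_open _).
Qed.

Definition bit_pair (n m : nat) (b : bool) : set cantor_space :=
  bit_set n true `&` bit_set m b.

Lemma open_bit_pair n m b : open (bit_pair n m b).
Proof. by apply: openI; apply: open_bit_set. Qed.

Section partition_image.
Variables (T : Type) (f : T -> cantor_space) (A : set T).

Lemma image_emptyP :
  (f @` A) (fun=> false) <-> ~ A `<=` f @^-1` \bigcup_n bit_set n true.
Proof.
split=> [[a Aa fa0] /(_ _ Aa) []|/existsNP[a /not_implyP[Aa nfa]]].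
  by rewrite fa0.
exists a => //; apply/funext => n; apply/negbTE/negP => fan.
by apply: nfa; exists n.
Qed.

Lemma image_coverP n :
  (exists2 B, (f @` A) B & B n = true) <-> ~ A `<=` f @^-1` bit_set n false.
Proof.
split=> [[_ [a Aa <-] fan] /(_ _ Aa)|/existsNP[a /not_implyP[Aa nfan]]].
  by rewrite /bit_set /= fan.
by exists (f a); [exists a|move: nfan; rewrite /bit_set /=; case: (f a n)].
Qed.

Lemma image_disjointP :
  (forall B C, (f @` A) B -> (f @` A) C -> B <> C ->
     forall n, ~~ (B n && C n)) <->
  (forall n m b, ~ (A `&` f @^-1` bit_pair n m b !=set0 /\
                   A `&` f @^-1` bit_pair n m (~~ b) !=set0)).
Proof.
split=> [dis n m b [[a [Aa [an am]]] [c [Ac [cn cm]]]]|].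
  have ac : f a <> f c.
    by move=> eac; move: cm; rewrite /bit_set /= -eac am; case: (b).
  by move: (dis _ _ (imageP _ Aa) (imageP _ Ac) ac n); rewrite an cn.
move=> H _ _ [a Aa <-] [c Ac <-] ac n; apply/negP => /andP[an cn].
have [m am] : exists m, f a m <> f c m.
  by apply/existsNP => eac; apply/ac/funext.
apply: (H n m (f a m)); split; [exists a | exists c]; do 2!split=> //.
by move: am; rewrite /bit_set /=; case: (f a m); case: (f c m).
Qed.

End partition_image.

Lemma is_partition_imageP (T : Type) (f : T -> cantor_space) (A : set T) :
  is_partition (f @` A) <->
  [/\ ~ A `<=` f @^-1` \bigcup_n bit_set n true,
      forall n, ~ A `<=` f @^-1` bit_set n false &
      forall n m b, ~ (A `&` f @^-1` bit_pair n m b !=set0 /\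
                       A `&` f @^-1` bit_pair n m (~~ b) !=set0)].
Proof.
by split=> -[P0 P1 P2]; split=> [|n|];
  by [apply/image_emptyP | apply/image_coverP | apply/image_disjointP].
Qed.

Lemma open_set_val_preimage (X : topologicalType) (A W : set X) :
  open W -> open (set_val @^-1` W : set A).
Proof. by exists W. Qed.

Lemma partitions_inE (F : set cantor_space) :
  partitions_in F =
  ~` hyper_sub (set_val @^-1` \bigcup_n bit_set n true)
  `&` \bigcap_n ~` hyper_sub (set_val @^-1` bit_set n false)
  `&` \bigcap_(k : nat * nat * bool)
        ~` (hyper_meet (set_val @^-1` bit_pair k.1.1 k.1.2 k.2)
            `&` hyper_meet (set_val @^-1` bit_pair k.1.1 k.1.2 (~~ k.2))).
Proof.
apply/seteqP; split=> K.
  move=> /is_partition_imageP[P0 P1 P2].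
  by split; [split=> // n _; apply: P1 | move=> k _; apply: P2].
move=> [[P0 P1] P2]; apply/is_partition_imageP; split=> // [n|n m b].
  exact: P1.
exact: P2 (n, m, b) I.
Qed.

Lemma closed_partitions_in (F : set cantor_space) : closed (partitions_in F).
Proof.
rewrite partitions_inE; apply: closedI; [apply: closedI|].
- apply/open_closedC/open_hyper_sub/open_set_val_preimage.
  by apply: bigcup_open => n _; apply: open_bit_set.
- apply: closed_bigI => n _.
  exact/open_closedC/open_hyper_sub/open_set_val_preimage/open_bit_set.
- apply: closed_bigI => k _; apply: open_closedC.
  by apply: openI; apply/open_hyper_meet/open_set_val_preimage/open_bit_pair.
Qed.

Theorem mainTheorem1 (F : set cantor_space) :
  compact F ->
  closed (partitions_in F) /\ compact (partitions_in F).
Proof.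
move=> cF; have cP := closed_partitions_in F; split=> //.
exact: subclosed_compact cP (hyperspace_compact _ (compact_set_type _ _ cF)) _.
Qed.
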